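(* Let $p$ be a prime, $r\in\mathbb{N}$, and $M\in\mathrm{Mat}(d,\mathbb{Z})$. For $s\in\mathbb{N}$ let $\mathrm{Per}_s(M)$ be the set of periodic points of $x\mapsto Mx\bmod p^s$ on $(\mathbb{Z}/p^s\mathbb{Z})^d$, $\ker_s(N)=\{x\in(\mathbb{Z}/p^s\mathbb{Z})^d: Nx\equiv0\pmod{p^s}\}$, and $m(s)$ the smallest $m\ge0$ with $M^{k+m}\equiv M^m\pmod{p^s}$ for some $k\ge1$. Then, as $\mathbb{F}_p$-vector spaces (modules over $\mathbb{Z}/p\mathbb{Z}$), $$\mathrm{Per}_r(M)/p\,\mathrm{Per}_r(M)\simeq\mathrm{Per}_1(M),\qquad \ker_r(M^{m(r)})/p\ker_r(M^{m(r)})\simeq\ker_1(M^{m(1)}),$$ and $$|\mathrm{Per}_r(M)|=p^{rd'}=|\mathrm{Per}_1(M)|^r,\qquad |\ker_r(M^{m(r)})|=p^{r(d-d')}=|\ker_1(M^{m(1)})|^r,$$ where $d'$ is the rank of the free $\mathbb{Z}/p^r\mathbb{Z}$-module $\mathrm{Per}_r(M)$.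
   Context: A point $x$ is periodic if $M^kx\equiv x$ for some $k\ge1$. $\mathrm{Per}_r(M)$ and $\ker_r(M^{m(r)})$ are free $\mathbb{Z}/p^r\mathbb{Z}$-modules with $(\mathbb{Z}/p^r\mathbb{Z})^d=\mathrm{Per}_r(M)\oplus\ker_r(M^{m(r)})$. *)

From HB Require Import structures.
From mathcomp Require Import all_boot all_order all_algebra.
From mathcomp Require Import boolp.
Set Implicit Arguments. Unset Strict Implicit. Unset Printing Implicit Defensive.
Import GRing.Theory.
Local Open Scope ring_scope.

Definition redmx (n d : nat) (N : 'M[int]_d) : 'M['Z_n]_d :=
  map_mx (fun z : int => z%:~R) N.

Definition Per (n d : nat) (M : 'M[int]_d) : {set 'cV['Z_n]_d} :=
  [set x | `[< exists k : nat, (0 < k)%N /\ redmx n (M ^+ k) *m x = x >]].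

Definition kerM (n d : nat) (N : 'M[int]_d) : {set 'cV['Z_n]_d} :=
  [set x | redmx n N *m x == 0].

Definition preperiodic (n d : nat) (M : 'M[int]_d) (m : nat) : Prop :=
  exists k : nat, (0 < k)%N /\ redmx n (M ^+ (k + m)) = redmx n (M ^+ m).
Definition is_min_preperiod (n d : nat) (M : 'M[int]_d) (m : nat) : Prop :=
  preperiodic n M m /\ forall m', preperiodic n M m' -> (m <= m')%N.

Definition free_of_rank (n d : nat) (S : {set 'cV['Z_n]_d}) (e : nat) : Prop :=
  exists v : 'I_e -> 'cV['Z_n]_d,
    [/\ forall i, v i \in S,
        forall x, x \in S -> exists c : 'I_e -> 'Z_n, x = \sum_i c i *: v i
      & forall c c' : 'I_e -> 'Z_n,
          \sum_i c i *: v i = \sum_i c' i *: v i -> forall i, c i = c' i].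

(* A / q A is isomorphic to B (as groups, equivalently as Z/qZ-modules):
   there is an additive map f on A onto B whose kernel in A is q A
   (first isomorphism theorem). *)
Definition quot_iso (n m d : nat) (q : nat)
    (A : {set 'cV['Z_n]_d}) (B : {set 'cV['Z_m]_d}) : Prop :=
  exists f : 'cV['Z_n]_d -> 'cV['Z_m]_d,
    [/\ {in A &, forall x y, f (x - y) = f x - f y},
        f @: A = B
      & [set x in A | f x == 0] = [set x *+ q | x in A]].

From HB Require Import structures.
From mathcomp Require Import all_boot all_order all_algebra.
From mathcomp Require Import boolp.
Set Implicit Arguments. Unset Strict Implicit. Unset Printing Implicit Defensive.
Import GRing.Theory.
Local Open Scope ring_scope.

(* A power E = M^e, with e >= m(s) a multiple of the eventual period, is
   idempotent mod p^s; it cuts out Per_s(M) as Fix(E) and ker_s(M^m(s)) as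
   ker(E) = Fix(1 - E), and choosing e independently of s makes E mod p the
   reduction of E mod p^r.  For an idempotent E, reduction mod p maps Fix(E)
   onto Fix(E mod p) (lift y arbitrarily to x and take E x) with kernel
   p Fix(E), so it sends a basis of Fix(E) to a basis of Fix(E mod p).  The
   sizes of the kernels follow from ('Z_n)^d = Fix(E) (+) ker(E). *)

Definition mxfix (R : finPzRingType) d (E : 'M[R]_d) : {set 'cV[R]_d} :=
  [set x | E *m x == x].

Definition mxnull (R : finPzRingType) d (E : 'M[R]_d) : {set 'cV[R]_d} :=
  [set x | E *m x == 0].

Definition unique_coords (R : pzRingType) d e (v : 'I_e -> 'cV[R]_d) :=
  forall c c' : 'I_e -> R,
    \sum_i c i *: v i = \sum_i c' i *: v i -> forall i, c i = c' i.

Lemma mulmxMn (R : pzRingType) m n l (A : 'M[R]_(m, n)) (B : 'M[R]_(n, l)) k :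
  A *m (B *+ k) = (A *m B) *+ k.
Proof. by elim: k => [|k IH]; rewrite ?mulr0n ?mulmx0 // !mulrS mulmxDr IH. Qed.

Lemma expn_cofactor p a b K : (1 < p)%N -> (0 < K)%N ->
  (p ^ a * K)%N = (p ^ b)%N -> K = (p ^ (b - a))%N.
Proof.
move=> p_gt1 K_gt0 eq_pK.
have a_le_b : (a <= b)%N by rewrite -(leq_exp2l _ _ p_gt1) -eq_pK leq_pmulr.
by rewrite expnB ?(ltnW p_gt1) // -eq_pK mulKn // expn_gt0 ltnW.
Qed.

Lemma card_Zmod n : (1 < n)%N -> #|{: 'Z_n}| = n.
Proof. by move=> n_gt1; rewrite card_ord Zp_cast. Qed.

Lemma card_unique_coords (R : finPzRingType) d e (v : 'I_e -> 'cV[R]_d) :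
  unique_coords v ->
  #|[set \sum_i c i *: v i | c : {ffun 'I_e -> R}]| = (#|R| ^ e)%N.
Proof.
move=> v_coords; rewrite card_in_imset ?cardsT ?card_ffun ?card_ord //.
by move=> c c' _ _ /v_coords eq_c; apply/ffunP.
Qed.

Lemma mxfix_lincomb (R : finComPzRingType) d e (E : 'M[R]_d)
    (v : 'I_e -> 'cV[R]_d) (c : 'I_e -> R) :
  (forall i, v i \in mxfix E) -> \sum_i c i *: v i \in mxfix E.
Proof.
move=> v_fix; rewrite inE mulmx_sumr; apply/eqP/eq_bigr => i _.
by rewrite -scalemxAr; have := v_fix i; rewrite inE => /eqP ->.
Qed.

Lemma mxnull_gt0 (R : finPzRingType) d (E : 'M[R]_d) : (0 < #|mxnull E|)%N.
Proof. by rewrite card_gt0; apply/set0Pn; exists 0; rewrite inE mulmx0. Qed.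

Section IdempotentMatrix.
Variables (R : finPzRingType) (d : nat) (E : 'M[R]_d).

Lemma mxnull_mxfix : mxnull E = mxfix (1%:M - E).
Proof.
apply/setP => x; rewrite !inE mulmxBl mul1mx.
by rewrite [in RHS]eq_sym -[X in _ = X]subr_eq0 opprB addrC subrK.
Qed.

Hypothesis E_idem : E *m E = E.

Lemma compl_idem : (1%:M - E) *m (1%:M - E) = 1%:M - E.
Proof. by rewrite mulmxBl mul1mx mulmxBr mulmx1 E_idem subrr subr0. Qed.

Lemma card_mxfix_mxnull : (#|mxfix E| * #|mxnull E|)%N = (#|R| ^ d)%N.
Proof.
rewrite -cardsX -[d in RHS]muln1 -card_mx -cardsT.
rewrite -(card_in_imset (f := fun ab : 'cV[R]_d * 'cV[R]_d => ab.1 + ab.2)).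
  apply: eq_card => x; rewrite inE; apply/imsetP.
  exists (E *m x, x - E *m x); last by rewrite /= addrC subrK.
  by rewrite !inE /= mulmxA E_idem eqxx mulmxBr mulmxA E_idem subrr eqxx.
move=> [a1 b1] [a2 b2]; rewrite !inE /=.
move=> /andP[/eqP Ea1 /eqP Eb1] /andP[/eqP Ea2 /eqP Eb2] eq_sum.
have eq_a : a1 = a2.
  by rewrite -Ea1 -Ea2 -[E *m a1]addr0 -Eb1 -mulmxDr eq_sum mulmxDr Eb2 addr0.
by move: eq_sum; rewrite eq_a => /addrI ->.
Qed.

End IdempotentMatrix.

Section EventualIdempotent.
Variables (R : pzRingType) (a : R) (m k e : nat).
Hypotheses (a_preperiodic : a ^+ (k + m) = a ^+ m)
  (m_le_e : (m <= e)%N) (k_dvd_e : (k %| e)%N).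

Lemma exprD_mul_period t j : (m <= t)%N -> a ^+ (t + j * k) = a ^+ t.
Proof.
have period s : (m <= s)%N -> a ^+ (s + k) = a ^+ s.
  by move=> m_le_s; rewrite -(subnK m_le_s) -addnA (addnC m) exprD a_preperiodic -exprD.
move=> m_le_t; elim: j => [|j IH]; first by rewrite addn0.
by rewrite mulSnr addnA period ?IH // (leq_trans m_le_t) ?leq_addr.
Qed.

Lemma exprD_mul_exponent j : a ^+ (e + j * e) = a ^+ e.
Proof. by rewrite -(divnK k_dvd_e) mulnA exprD_mul_period // divnK. Qed.

Lemma expr_idem : a ^+ e * a ^+ e = a ^+ e.
Proof. by rewrite -exprD -{2}(mul1n e) exprD_mul_exponent. Qed.

End EventualIdempotent.

Section PeriodicPoints.
Variables (R : finPzRingType) (d : nat) (A : 'M[R]_d) (m k e : nat).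
Hypotheses (A_preperiodic : A ^+ (k + m) = A ^+ m)
  (m_le_e : (m <= e)%N) (k_dvd_e : (k %| e)%N) (e_gt0 : (0 < e)%N).

Lemma periodic_mxfix (x : 'cV[R]_d) :
  (exists j, (0 < j)%N /\ A ^+ j *m x = x) <-> A ^+ e *m x = x.
Proof.
split=> [[j [j_gt0 Ajx]] | Aex]; last by exists e.
have Ajx_iter i : A ^+ (j * i) *m x = x.
  by elim: i => [|i IH]; rewrite ?muln0 ?mul1mx // mulnS exprD -mulmxE -mulmxA IH.
rewrite -(exprD_mul_exponent A_preperiodic m_le_e k_dvd_e j.-1).
by rewrite -mulSn prednK.
Qed.

Lemma mxnull_preperiod : mxnull (A ^+ m) = mxnull (A ^+ e).
Proof.
apply/setP => x; rewrite !inE; apply/eqP/eqP => Ax0.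
  by rewrite -(subnK m_le_e) exprD -mulmxE -mulmxA Ax0 mulmx0.
have Ame : A ^+ (m + e) = A ^+ m.
  by rewrite -[e in LHS](divnK k_dvd_e) (exprD_mul_period A_preperiodic).
by rewrite -Ame exprD -mulmxE -mulmxA Ax0 mulmx0.
Qed.

End PeriodicPoints.

Lemma redmxX n d (M : 'M[int]_d) j : redmx n (M ^+ j) = redmx n M ^+ j.
Proof. exact: rmorphXn. Qed.

Lemma Per_kerM_idempotent n d (M : 'M[int]_d) m k e :
  redmx n (M ^+ (k + m)) = redmx n (M ^+ m) ->
  (m <= e)%N -> (k %| e)%N -> (0 < e)%N ->
  [/\ redmx n (M ^+ e) *m redmx n (M ^+ e) = redmx n (M ^+ e),
      Per n M = mxfix (redmx n (M ^+ e))
    & kerM n (M ^+ m) = mxnull (redmx n (M ^+ e))].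
Proof.
rewrite !redmxX => pre m_le_e k_dvd_e e_gt0; split.
- by rewrite mulmxE (expr_idem pre).
- apply/setP => x; rewrite !inE; apply/asboolP/eqP => [[j [j_gt0]] | Aex].
    by rewrite redmxX => Ajx; apply/(periodic_mxfix pre); last by exists j.
  by exists e; rewrite redmxX.
- by rewrite -(mxnull_preperiod pre) //; apply/setP => x; rewrite !inE redmxX.
Qed.

Section Reduction.
Variables (q n : nat).
Hypotheses (q_gt1 : (1 < q)%N) (q_dvd_n : (q %| n)%N) (n_gt0 : (0 < n)%N).

Let n_gt1 : (1 < n)%N. Proof. exact: leq_trans q_gt1 (dvdn_leq n_gt0 q_dvd_n). Qed.

Definition red_Zp (a : 'Z_n) : 'Z_q := (a : nat)%:R.

Lemma red_Zp_natr j : red_Zp j%:R = j%:R.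
Proof.
by apply: ord_inj; rewrite /red_Zp !val_Zp_nat // modn_dvdm.
Qed.

Lemma red_ZpD : {morph red_Zp : a b / a + b}.
Proof.
by move=> a b; rewrite -[a in LHS]natr_Zp -[b in LHS]natr_Zp -natrD red_Zp_natr natrD.
Qed.

Fact red_Zp_is_zmod_morphism : zmod_morphism red_Zp.
Proof. by move=> a b; rewrite -[in RHS](subrK b a) (red_ZpD (a - b)) addrK. Qed.
HB.instance Definition _ :=
  GRing.isZmodMorphism.Build _ _ red_Zp red_Zp_is_zmod_morphism.

Fact red_Zp_is_monoid_morphism : monoid_morphism red_Zp.
Proof.
split; first exact: (red_Zp_natr 1).
by move=> a b; rewrite -[a in LHS]natr_Zp -[b in LHS]natr_Zp -natrM red_Zp_natr natrM.
Qed.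
HB.instance Definition _ :=
  GRing.isMonoidMorphism.Build _ _ red_Zp red_Zp_is_monoid_morphism.

Lemma red_Zp_mulrn a : red_Zp (a *+ q) = 0.
Proof. by rewrite rmorphMn -mulr_natr pchar_Zp // mulr0. Qed.

Lemma red_Zp_eq0 a : red_Zp a = 0 -> exists b, a = b *+ q.
Proof.
move=> /(congr1 (@nat_of_ord _)); rewrite /red_Zp val_Zp_nat // => /eqP q_dvd_a.
by exists ((a : nat) %/ q)%:R; rewrite -mulrnA divnK // natr_Zp.
Qed.

Lemma map_red_mulrn m1 m2 (x : 'M['Z_n]_(m1, m2)) : map_mx red_Zp (x *+ q) = 0.
Proof. by apply/matrixP => i j; rewrite !mxE mulmxnE red_Zp_mulrn. Qed.

Lemma map_red_eq0 m1 m2 (x : 'M['Z_n]_(m1, m2)) :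
  map_mx red_Zp x = 0 -> exists y, x = y *+ q.
Proof.
move=> /matrixP x_red0.
have x_mul i j : exists b, x i j == b *+ q.
  by have := x_red0 i j; rewrite !mxE => /red_Zp_eq0 [b ->]; exists b.
exists (\matrix_(i, j) xchoose (x_mul i j)); apply/matrixP => i j.
by rewrite mulmxnE mxE; apply/eqP/(xchooseP (x_mul i j)).
Qed.

Lemma map_red_surj m1 m2 (y : 'M['Z_q]_(m1, m2)) : exists x, map_mx red_Zp x = y.
Proof.
exists (map_mx (fun b : 'Z_q => (b : nat)%:R) y).
by apply/matrixP => i j; rewrite !mxE red_Zp_natr natr_Zp.
Qed.

Lemma map_red_redmx d (N : 'M[int]_d) : map_mx red_Zp (redmx n N) = redmx q N.
Proof. by rewrite /redmx -map_mx_comp; apply: eq_map_mx => z /=; rewrite rmorph_int. Qed.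

Section FixedPoints.
Variables (d : nat) (E : 'M['Z_n]_d) (Er : 'M['Z_q]_d).
Hypotheses (E_idem : E *m E = E) (E_red : map_mx red_Zp E = Er).

Lemma map_red_mxfix x : x \in mxfix E -> map_mx red_Zp x \in mxfix Er.
Proof. by rewrite !inE -E_red -map_mxM => /eqP ->. Qed.

Lemma map_red_mxfix_surj y :
  y \in mxfix Er -> exists2 x, x \in mxfix E & map_mx red_Zp x = y.
Proof.
have [x <-] := map_red_surj y; rewrite inE => /eqP Er_x.
exists (E *m x); first by rewrite inE mulmxA E_idem.
by rewrite map_mxM E_red Er_x.
Qed.

Lemma map_red_mxfix_eq0 x :
  x \in mxfix E -> map_mx red_Zp x = 0 -> exists2 z, z \in mxfix E & x = z *+ q.
Proof.
rewrite inE => /eqP E_x /map_red_eq0 [y x_q]; exists (E *m y); last first.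
  by rewrite -E_x x_q mulmxMn.
by rewrite inE mulmxA E_idem.
Qed.

Lemma quot_iso_mxfix : quot_iso q (mxfix E) (mxfix Er).
Proof.
exists (map_mx red_Zp); split.
- by move=> x y _ _; rewrite map_mxB.
- apply/setP => y; apply/imsetP/idP => [[x x_fix ->] | /map_red_mxfix_surj [x x_fix <-]].
    exact: map_red_mxfix.
  by exists x.
- apply/setP => x; rewrite inE; apply/andP/imsetP => [[x_fix /eqP x_red0] | [z z_fix ->]].
    by have [z z_fix ->] := map_red_mxfix_eq0 x_fix x_red0; exists z.
  by rewrite map_red_mulrn; move: z_fix; rewrite !inE mulmxMn => /eqP ->.
Qed.

Section Basis.
Variables (e : nat) (v : 'I_e -> 'cV['Z_n]_d).
Hypotheses (v_fix : forall i, v i \in mxfix E)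
  (v_span : forall x, x \in mxfix E -> exists c : 'I_e -> 'Z_n, x = \sum_i c i *: v i)
  (v_coords : unique_coords v).

Lemma mxfix_span : mxfix E = [set \sum_i c i *: v i | c : {ffun 'I_e -> 'Z_n}].
Proof.
apply/setP => x; apply/idP/imsetP => [/v_span [c ->] | [c _ ->]].
  by exists [ffun i => c i]; last by apply: eq_bigr => i _; rewrite ffunE.
exact: mxfix_lincomb.
Qed.

Lemma map_red_mxfix_span :
  mxfix Er = [set \sum_i c i *: map_mx red_Zp (v i) | c : {ffun 'I_e -> 'Z_q}].
Proof.
apply/setP => y; apply/idP/imsetP => [| [c _ ->]].
  move=> /map_red_mxfix_surj [x /v_span [c ->] <-].
  exists [ffun i => red_Zp (c i)] => //.
  by rewrite map_mx_sum; apply: eq_bigr => i _; rewrite map_mxZ ffunE.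
by apply: mxfix_lincomb => i; apply: map_red_mxfix.
Qed.

Lemma map_red_unique_coords : unique_coords (fun i => map_mx red_Zp (v i)).
Proof.
move=> c1 c2 eq_red i.
pose L j := ((c1 j : nat)%:R - (c2 j : nat)%:R : 'Z_n).
have red_L j : red_Zp (L j) = c1 j - c2 j by rewrite rmorphB /= !red_Zp_natr !natr_Zp.
have L_fix : \sum_j L j *: v j \in mxfix E by apply: mxfix_lincomb.
have L_red0 : map_mx red_Zp (\sum_j L j *: v j) = 0.
  rewrite map_mx_sum (eq_bigr (fun j => c1 j *: map_mx red_Zp (v j) - c2 j *: map_mx red_Zp (v j))).
    by rewrite sumrB eq_red subrr.
  by move=> j _; rewrite map_mxZ /= red_L scalerBl.
have [z /v_span [b ->] L_q] := map_red_mxfix_eq0 L_fix L_red0.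
have L_b : L i = b i *+ q.
  apply: (@v_coords L (fun j => b j *+ q) _ i).
  by rewrite L_q -sumrMnl; apply: eq_bigr => j _; rewrite scalerMnl.
by apply/eqP; rewrite -subr_eq0 -red_L L_b red_Zp_mulrn.
Qed.

End Basis.

Lemma card_mxfix_free e : free_of_rank (mxfix E) e ->
  #|mxfix E| = (n ^ e)%N /\ #|mxfix Er| = (q ^ e)%N.
Proof.
case=> v [v_fix v_span v_coords].
rewrite (mxfix_span v_fix v_span) (map_red_mxfix_span v_fix v_span).
by rewrite !card_unique_coords ?card_Zmod //; apply: map_red_unique_coords.
Qed.

End FixedPoints.

Lemma quot_iso_mxnull d (E : 'M['Z_n]_d) (Er : 'M['Z_q]_d) :
  E *m E = E -> map_mx red_Zp E = Er -> quot_iso q (mxnull E) (mxnull Er).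
Proof.
move=> E_idem E_red; rewrite !mxnull_mxfix.
apply: quot_iso_mxfix (compl_idem E_idem) _.
by rewrite map_mxB map_mx1 E_red.
Qed.

End Reduction.

Theorem corollary3p9 (p r d : nat) (M : 'M[int]_d) (mr m1 d' : nat) :
  prime p -> (0 < r)%N ->
  is_min_preperiod (p ^ r) M mr ->
  is_min_preperiod p M m1 ->
  free_of_rank (Per (p ^ r) M) d' ->
  [/\ quot_iso p (Per (p ^ r) M) (Per p M),
      quot_iso p (kerM (p ^ r) (M ^+ mr)) (kerM p (M ^+ m1)),
      #|Per (p ^ r) M| = (p ^ (r * d'))%N /\ (p ^ (r * d'))%N = (#|Per p M| ^ r)%N
    & #|kerM (p ^ r) (M ^+ mr)| = (p ^ (r * (d - d')))%N /\
      (p ^ (r * (d - d')))%N = (#|kerM p (M ^+ m1)| ^ r)%N].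
Proof.
move=> p_prime r_gt0 [[kr [kr_gt0 pre_r]] _] [[k1 [k1_gt0 pre_1]] _].
have p_gt1 := prime_gt1 p_prime.
have p_dvd_pr : (p %| p ^ r)%N by rewrite dvdn_exp.
have pr_gt1 : (1 < p ^ r)%N by rewrite -(exp1n r) ltn_exp2r -?lt0n.
have pr_gt0 := ltnW pr_gt1.
pose e := (kr * k1 * (mr + m1).+1)%N.
have e_gt0 : (0 < e)%N by rewrite !muln_gt0 kr_gt0 k1_gt0.
have lt_e : (mr + m1 < e)%N by rewrite leq_pmull // muln_gt0 kr_gt0 k1_gt0.
have kr_dvd_e : (kr %| e)%N by rewrite /e -mulnA dvdn_mulr.
have k1_dvd_e : (k1 %| e)%N by rewrite /e mulnAC dvdn_mull.
have [idem_r -> ->] := Per_kerM_idempotent pre_r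
  (leq_trans (leq_addr _ _) (ltnW lt_e)) kr_dvd_e e_gt0.
have [idem_1 -> ->] := Per_kerM_idempotent pre_1
  (leq_trans (leq_addl _ _) (ltnW lt_e)) k1_dvd_e e_gt0.
have E_red := map_red_redmx p_gt1 p_dvd_pr pr_gt0 (M ^+ e).
move=> /(card_mxfix_free p_gt1 p_dvd_pr pr_gt0 idem_r E_red) [card_r card_1].
have := card_mxfix_mxnull idem_r; have := card_mxfix_mxnull idem_1.
rewrite !card_Zmod // card_r card_1 -!expnM.
move=> /(expn_cofactor p_gt1 (mxnull_gt0 _)) -> /(expn_cofactor p_gt1 (mxnull_gt0 _)) ->.
split; [exact: quot_iso_mxfix | exact: quot_iso_mxnull | |].
- by rewrite mulnC.
- by rewrite -mulnBr -expnM mulnC.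
Qed.
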